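(* Let $K=\{u\in L_1[0,1]: 0\le u\le 1 \text{ a.e.}\}$ with the norm $\|\cdot\|_1$, and define $T\colon K\to K$ a.e. on $[0,1]$ by $Tu(t)=\frac12u(t)\int_0^tu(s)\,ds$. Then $T$ is $\mathfrak{cm}$-nonexpansive: for all $n\in\mathbb{N}$, $v\in K$ and sequences $(u_i)_{i=1}^\infty\subset K$, $$\limsup_{i\to\infty}\sup_{A\subset\{1,\dots,n\}}\Big\|\sum_{k\in A}(Tu_{i+k}-Tv)\Big\|_1\le\limsup_{i\to\infty}\sup_{A\subset\{1,\dots,n\}}\Big\|\sum_{k\in A}(u_{i+k}-v)\Big\|_1.$$ *)

From HB Require Import structures.
From mathcomp Require Import all_boot all_order all_algebra.
From mathcomp Require Import all_classical all_reals all_analysis.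
Set Implicit Arguments. Unset Strict Implicit. Unset Printing Implicit Defensive.
Import Order.TTheory GRing.Theory Num.Theory.
Local Open Scope classical_set_scope.
Local Open Scope ring_scope.

(* Elements of L_1[0,1] are represented by functions R -> R; everything
   (membership, norm) only looks at their values on [0,1] up to null sets. *)

Definition I01 (R : realType) : set R := [set t : R | 0 <= t <= 1].

Definition inK (R : realType) (u : R -> R) : Prop :=
  measurable_fun (@I01 R) u /\
  (lebesgue_measure : set R -> \bar R).-integrable (@I01 R) (EFin \o u) /\
  {ae (lebesgue_measure : set R -> \bar R),
     forall t, t \in @I01 R -> (0 <= u t <= 1)%R}.

Definition L1norm (R : realType) (f : R -> R) : \bar R :=
  (\int[(lebesgue_measure : set R -> \bar R)]_(t in (@I01 R)) (`|f t|)%:E)%E.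

Definition Top (R : realType) (u : R -> R) : R -> R :=
  fun t => 2^-1 * u t *
    fine (\int[(lebesgue_measure : set R -> \bar R)]_(s in ([set s : R | (0 <= s <= t)%R])%classic) (u s)%:E)%E.

(* sup_{A subset {1..n}} || sum_{k in A} (f (i+k) - g) ||_1, with k = j.+1, j : 'I_n *)
Definition supA (R : realType) (n : nat) (f : nat -> R -> R) (g : R -> R) (i : nat)
  : \bar R :=
  (\big[Order.max/0%E]_(A : {set 'I_n})
     L1norm (fun t => \sum_(j in A) (f (i + j.+1)%N t - g t))%R)%E.

(* Write U(t) = \int_0^t u.  For u_j, v in K one has
     2 (T u_j - T v) = V (u_j - v) + u_j (U_j - V).
   Since |V| <= 1, the first term summed over A is bounded by |sum_A (u_j - v)|.
   Since 0 <= u_j <= 1, the second one is bounded at each t by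
   |sum_B (U_j - V)(t)| = |\int_0^t sum_B (u_j - v)| <= ||sum_B (u_j - v)||_1,
   where B is the part of A on which U_j - V has the sign of the sum.
   Integrating over [0, 1] gives, for every i,
     ||sum_A (T u_j - T v)||_1 <= M/2 + M/2 = M
   with M the right-hand supremum, and lim sup is monotone. *)

From HB Require Import structures.
From mathcomp Require Import all_boot all_order all_algebra.
From mathcomp Require Import all_classical all_reals all_analysis.
From mathcomp Require Import ring lra measurable_realfun.
Import Order.TTheory GRing.Theory Num.Theory.
Local Open Scope classical_set_scope.
Local Open Scope ring_scope.

Lemma le_limn_esup (R : realType) (f g : nat -> \bar R) :
  (forall i, (f i <= g i)%E) -> (limn_esup f <= limn_esup g)%E.
Proof.
move=> fg; rewrite !limn_esup_lim.
apply: lee_lim; [exact: is_cvg_esups|exact: is_cvg_esups|].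
apply: nearW => m; apply: ge_ereal_sup => _ [k /= mk <-].
by apply: le_trans (fg k) _; apply: ereal_sup_ubound; exists k.
Qed.

Lemma norm_wsum_le_subset_sum {R : realDomainType} {I : finType} (A : {set I})
    (a c : I -> R) :
  (forall k, k \in A -> 0 <= a k <= 1) ->
  exists B : {set I}, `|\sum_(k in A) a k * c k| <= `|\sum_(k in B) c k|.
Proof.
move=> a01; set x := \sum_(k in A) _.
pose P := [set k in A | 0 <= c k]; pose N := [set k in A | c k <= 0].
have le_P : x <= \sum_(k in P) c k.
  rewrite /x big_mkcond [leRHS]big_mkcond /=; apply: ler_sum => k _.
  rewrite inE; have [kA /=|//] := boolP (k \in A); have /andP[a0 a1] := a01 k kA.
  have [ck|ck] := leP 0 (c k); first by rewrite ler_piMl.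
  by rewrite mulr_ge0_le0 // ltW.
have ge_N : \sum_(k in N) c k <= x.
  rewrite /x big_mkcond [leRHS]big_mkcond /=; apply: ler_sum => k _.
  rewrite inE; have [kA /=|//] := boolP (k \in A); have /andP[a0 a1] := a01 k kA.
  have [ck|ck] := leP (c k) 0; last by rewrite mulr_ge0 // ltW.
  by rewrite -lerN2 -mulrN ler_piMl // oppr_ge0.
have [x0|x0] := leP 0 x.
  by exists P; rewrite ger0_norm //; apply: le_trans le_P (ler_norm _).
exists N; rewrite ltr0_norm // -normrN; apply: le_trans (ler_norm _).
by rewrite lerN2.
Qed.

Lemma Top_sum_diff_pointwise_le {R : realFieldType} {I : finType} (A : {set I})
    (w W : I -> R) (v V : R) :
  (forall j, j \in A -> 0 <= w j <= 1) -> `|V| <= 1 ->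
  exists B : {set I},
    `|\sum_(j in A) (2^-1 * w j * W j - 2^-1 * v * V)| <=
    2^-1 * `|\sum_(j in A) (w j - v)| + 2^-1 * `|\sum_(j in B) (W j - V)|.
Proof.
move=> w01 V1.
have [B le_B] := norm_wsum_le_subset_sum A w (fun j => W j - V) w01.
exists B.
have -> : \sum_(j in A) (2^-1 * w j * W j - 2^-1 * v * V) =
    2^-1 * (V * \sum_(j in A) (w j - v) + \sum_(j in A) w j * (W j - V)).
  rewrite mulr_sumr -big_split mulr_sumr; apply: eq_bigr => j _ /=; ring.
have half_ge0 : 0 <= 2^-1 :> R by rewrite invr_ge0.
rewrite normrM ger0_norm // -mulrDr ler_wpM2l //.
apply: le_trans (ler_normD _ _) (lerD _ le_B).
by rewrite normrM ler_piMl.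
Qed.

Section integral_sum_real.
Context {d : measure_display} {T : measurableType d} {R : realType}.
Context {mu : {measure set T -> \bar R}} {D : set T} (mD : measurable D).
Context {I : Type} {f : I -> T -> R}.
Hypothesis intf : forall k, mu.-integrable D (EFin \o f k).

Lemma integrable_EFin_sum (s : seq I) (P : pred I) :
  mu.-integrable D (EFin \o fun x => \sum_(k <- s | P k) f k x).
Proof.
apply: (eq_integrable mD (fun x => \sum_(k <- s | P k) (f k x)%:E)).
  by move=> x _; rewrite /= sumEFin.
by apply: integrable_sum => // k _; exact: intf.
Qed.

Lemma Rintegral_sum (s : seq I) (P : pred I) :
  \int[mu]_(x in D) (\sum_(k <- s | P k) f k x) =
  \sum_(k <- s | P k) \int[mu]_(x in D) f k x.
Proof.
elim: s => [|k s IHs].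
  under eq_Rintegral do rewrite big_nil.
  by rewrite big_nil Rintegral_cst // mul0r.
rewrite big_cons; case: ifP => Pk; last first.
  by rewrite -IHs; apply: eq_Rintegral => x _; rewrite big_cons Pk.
rewrite -IHs -RintegralD //; last exact: integrable_EFin_sum.
by apply: eq_Rintegral => x _; rewrite big_cons Pk.
Qed.

End integral_sum_real.

Lemma le_normr_Rintegral_subset {d} {T : measurableType d} {R : realType}
    {mu : {measure set T -> \bar R}} {D E : set T} {f : T -> R} :
  measurable D -> measurable E -> D `<=` E -> mu.-integrable E (EFin \o f) ->
  (`|\int[mu]_(x in D) f x|%:E <= \int[mu]_(x in E) `|f x|%:E)%E.
Proof.
move=> mD mE DE fi; have /integrableP[mf _] := fi.
rewrite EFin_normr_Rintegral //; last exact: integrableS fi.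
apply: le_trans (le_abse_integral mu mD (measurable_funS mE DE mf)) _.
apply: ge0_subset_integral => //; apply/measurable_EFinP.
exact/measurableT_comp/measurable_EFinP.
Qed.

Section Rintegral_Icc.
Context {R : realType} (mu : {measure set R -> \bar R}).

Lemma measurable_fun_Rintegral_Icc (a b : R) (f : R -> R) :
  mu.-integrable `[a, b] (EFin \o f) ->
  measurable_fun `[a, b] (fun t => \int[mu]_(x in `[a, t]) f x).
Proof.
move=> fi.
(* [t |-> \int_[a, min t b] f^+] and [f^-] are nondecreasing on all of [R]. *)
have sub_ab c : `[a, Order.min c b] `<=` `[a, b].
  by apply: subset_itvl; rewrite bnd_simp ge_min lexx orbT.
pose F (g : R -> \bar R) t := fine (\int[mu]_(x in `[a, Order.min t b]) g x).
have mF g : mu.-integrable `[a, b] g -> (forall x, 0 <= g x)%E ->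
    measurable_fun `[a, b] (F g).
  move=> gi g0; apply: nondecreasing_measurable => // s t st.
  have gi' c := integrableS (measurable_itv _) (measurable_itv _) (sub_ab c) gi.
  apply: fine_le; [exact: (integrable_fin_num (measurable_itv _) (gi' s))|
    exact: (integrable_fin_num (measurable_itv _) (gi' t))|].
  apply: (ge0_subset_integral mu (measurable_itv _) (measurable_itv _)) => //.
    by case/integrableP: (gi' t).
  by apply: subset_itvl; rewrite bnd_simp le_min2.
apply: (eq_measurable_fun (F (funepos (EFin \o f)) \- F (funeneg (EFin \o f)))).
  move=> t /set_mem/=; rewrite in_itv /= => /andP[_ tb].
  have fi' := integrableS (measurable_itv _) (measurable_itv _) (sub_ab t) fi.
  rewrite /F /= (min_idPl tb) in fi' *.
  rewrite /Rintegral [in RHS]integralE [in RHS]fineB //.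
  - exact: (integrable_fin_num _ (integrable_funepos (measurable_itv _) fi')).
  - exact: (integrable_fin_num _ (integrable_funeneg (measurable_itv _) fi')).
apply: measurable_funB; apply: mF.
- exact: (integrable_funepos (measurable_itv _) fi).
- exact: funepos_ge0.
- exact: (integrable_funeneg (measurable_itv _) fi).
- exact: funeneg_ge0.
Qed.

End Rintegral_Icc.

(* [L1norm], [inK] and [Top] integrate [lebesgue_measure] over the canonical
   measurable type of [R], while its measure structure is declared on
   [measurableTypeR R]; [lebesgueR] is the same set function with a measure
   structure on the former, so that the generic integration lemmas apply. *)
Definition lebesgueR (R : realType) : set R -> \bar R := @lebesgue_measure R.

Section lebesgueR_measure.
Context {R : realType}.
Let lebesgueR0 : lebesgueR R set0 = 0%E.
Proof. exact: (measure0 (@lebesgue_measure R)). Qed.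
Let lebesgueR_ge0 A : (0 <= lebesgueR R A)%E.
Proof. exact: (measure_ge0 (@lebesgue_measure R)). Qed.
Let lebesgueR_semi_sigma_additive : semi_sigma_additive (lebesgueR R).
Proof. exact: (@measure_semi_sigma_additive _ _ _ (@lebesgue_measure R)). Qed.
HB.instance Definition _ := isMeasure.Build _ R R (lebesgueR R)
  lebesgueR0 lebesgueR_ge0 lebesgueR_semi_sigma_additive.
End lebesgueR_measure.

Section unit_interval.
Context {R : realType}.
Local Notation mu := (lebesgueR R : {measure set R -> \bar R}).
Local Notation I := (@I01 R).

Lemma I01E : I = `[0, 1]%classic.
Proof. by rewrite set_itvcc. Qed.

Lemma measurable_I01 : measurable I.
Proof. by rewrite I01E. Qed.

Lemma lebesgueR_I01 : mu I = 1%E.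
Proof.
by rewrite /= /lebesgueR I01E lebesgue_measure_itv /= lte01 oppr0 adde0.
Qed.

Lemma L1normE (f : R -> R) : L1norm f = (\int[mu]_(t in I) `|f t|%:E)%E.
Proof. by []. Qed.

Lemma inKE {u : R -> R} : inK u ->
  [/\ measurable_fun I u, mu.-integrable I (EFin \o u) &
      {ae mu, forall t, t \in I -> 0 <= u t <= 1}].
Proof. by case=> ? []. Qed.

Lemma TopE (u : R -> R) :
  Top u = fun t => 2^-1 * u t * \int[mu]_(s in `[0, t]) u s.
Proof. by apply/funext => t; rewrite /Top set_itvcc. Qed.

Lemma measurable_Top (u : R -> R) : inK u -> measurable_fun I (Top u).
Proof.
move=> /inKE[mfu ui _]; rewrite TopE.
apply: measurable_funM.
  by apply: measurable_funM => //; exact: measurable_cst.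
by rewrite I01E in ui *; exact: measurable_fun_Rintegral_Icc.
Qed.

Lemma L1norm_le1 {u : R -> R} : inK u -> (L1norm u <= 1)%E.
Proof.
move=> /inKE[mfu _ u01].
have u_le1 : {ae mu, forall t, I t -> (`|(EFin \o u) t| <= 1)%E}.
  apply: filterS u01 => t u01t It; have /andP[u0 u1] := u01t (mem_set It).
  by rewrite /= lee_fin ger0_norm.
have mEu : measurable_fun I (EFin \o u) by exact/measurable_EFinP.
have := integral_le_bound 1%E measurable_I01 mEu lee01 u_le1.
by rewrite /= lebesgueR_I01 mule1.
Qed.

Lemma L1norm_le_ae {g h : R -> R} {a : R} {b : \bar R} :
  measurable_fun I g -> measurable_fun I h -> 0 <= a -> (0 <= b)%E ->
  {ae mu, forall t, I t -> (`|g t|%:E <= (a * `|h t|)%:E + b)%E} ->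
  (L1norm g <= a%:E * L1norm h + b)%E.
Proof.
move=> mg mh a0 b0 gh; rewrite !L1normE.
have m_norm (f : R -> R) :
    measurable_fun I f -> measurable_fun I (fun t => `|f t|%:E).
  by move=> mf; apply/measurable_EFinP; exact: measurableT_comp.
have norm_ge0 (f : R -> R) t : I t -> (0 <= `|f t|%:E)%E by rewrite lee_fin.
have ah_ge0 t : I t -> (0 <= (a * `|h t|)%:E)%E by rewrite lee_fin mulr_ge0.
have m_ah : measurable_fun I (fun t => (a * `|h t|)%:E).
  apply/measurable_EFinP; apply: measurable_funM; first exact: measurable_cst.
  exact: measurableT_comp.
have rhs_ge0 t : I t -> (0 <= (a * `|h t|)%:E + b)%E.
  by move=> It; rewrite adde_ge0 ?ah_ge0.
have m_rhs : measurable_fun I (fun t => (a * `|h t|)%:E + b)%E.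
  by apply: emeasurable_funD => //; exact: measurable_cst.
apply: le_trans (ae_ge0_le_integral measurable_I01 (norm_ge0 g) (m_norm _ mg)
  rhs_ge0 m_rhs gh) _.
rewrite ge0_integralD //; last exact: measurable_I01.
rewrite integral_cst /=; last exact: measurable_I01.
rewrite lebesgueR_I01 mule1.
under eq_integral do rewrite EFinM.
by rewrite (ge0_integralZl_EFin _ measurable_I01 (norm_ge0 h) (m_norm _ mh) a0).
Qed.

Lemma integrable_sum_sub {J : finType} {w : J -> R -> R} {v : R -> R}
    (B : {set J}) :
  inK v -> (forall j, inK (w j)) ->
  mu.-integrable I (EFin \o fun t => \sum_(j in B) (w j t - v t)).
Proof.
move=> /inKE[_ iv _] Kw.
apply: (integrable_EFin_sum measurable_I01 _ (index_enum J) (fun j => j \in B)).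
move=> j; have [_ iw _] := inKE (Kw j).
exact: (integrableB measurable_I01 iw iv).
Qed.

Lemma Top_sum_diff_le_ae {J : finType} {w : J -> R -> R} {v : R -> R}
    (A : {set J}) {M : \bar R} :
  inK v -> (forall j, inK (w j)) ->
  (forall B : {set J}, L1norm (fun t => \sum_(j in B) (w j t - v t))%R <= M)%E ->
  {ae mu, forall t, I t ->
    (`|\sum_(j in A) (Top (w j) t - Top v t)|%:E <=
     (2^-1 * `|\sum_(j in A) (w j t - v t)|)%:E + (2^-1)%:E * M)%E}.
Proof.
move=> Kv Kw le_M; have [_ iv v01] := inKE Kv.
have w01 : {ae mu, forall t, forall j, t \in I -> 0 <= w j t <= 1}.
  by apply: filter_forall => j; have [] := inKE (Kw j).
apply: filterS2 v01 w01 => t _ w01t It.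
have sub_t : `[0, t] `<=` I.
  by rewrite I01E; apply: subset_itvl; rewrite bnd_simp; case/andP: It.
have int_t f : mu.-integrable I (EFin \o f) -> mu.-integrable `[0, t] (EFin \o f).
  exact: integrableS measurable_I01 (measurable_itv _) sub_t.
pose V := \int[mu]_(s in `[0, t]) v s.
pose W j := \int[mu]_(s in `[0, t]) w j s.
have V_le1 : `|V| <= 1.
  rewrite -lee_fin; apply: le_trans _ (L1norm_le1 Kv).
  exact: (le_normr_Rintegral_subset (measurable_itv _) measurable_I01 sub_t iv).
have [B leB] := Top_sum_diff_pointwise_le A (w^~ t) W (v t) V
  (fun j _ => w01t j (mem_set It)) V_le1.
have WV_le_M : (`|\sum_(j in B) (W j - V)|%:E <= M)%E.
  have iwv j : mu.-integrable I (EFin \o fun s => w j s - v s).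
    by have [_ iw _] := inKE (Kw j); exact: (integrableB measurable_I01 iw iv).
  have -> : \sum_(j in B) (W j - V) =
      \int[mu]_(s in `[0, t]) \sum_(j in B) (w j s - v s).
    rewrite (Rintegral_sum (measurable_itv _) (fun j => int_t _ (iwv j))).
    apply: eq_bigr => j _; have [_ iw _] := inKE (Kw j).
    by rewrite RintegralB //; [exact: int_t iw|exact: int_t iv].
  apply: le_trans (le_M B).
  exact: (le_normr_Rintegral_subset (measurable_itv _) measurable_I01 sub_t
    (integrable_sum_sub B Kv Kw)).
have -> : \sum_(j in A) (Top (w j) t - Top v t) =
    \sum_(j in A) (2^-1 * w j t * W j - 2^-1 * v t * V).
  by apply: eq_bigr => j _; rewrite !TopE.
apply: le_trans (_ : (2^-1 * `|\sum_(j in A) (w j t - v t)| +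
  2^-1 * `|\sum_(j in B) (W j - V)|)%:E <= _)%E; first by rewrite lee_fin.
by rewrite EFinD; apply: leeD2l; rewrite EFinM lee_wpmul2l // lee_fin invr_ge0.
Qed.

Lemma L1norm_sum_Top_diff_le (J : finType) (w : J -> R -> R) (v : R -> R)
    (A : {set J}) :
  inK v -> (forall j, inK (w j)) ->
  (L1norm (fun t => \sum_(j in A) (Top (w j) t - Top v t))%R <=
   \big[Order.max/0%E]_(B : {set J})
     L1norm (fun t => \sum_(j in B) (w j t - v t))%R)%E.
Proof.
move=> Kv Kw; set M := (X in (_ <= X)%E).
have le_M (B : {set J}) :
    (L1norm (fun t => \sum_(j in B) (w j t - v t))%R <= M)%E.
  exact: le_bigmax.
have M_ge0 : (0 <= M)%E by exact: bigmax_ge_id.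
have mT : measurable_fun I (fun t => \sum_(j in A) (Top (w j) t - Top v t)).
  under eq_fun do rewrite -big_enum /=.
  apply: measurable_sum => j; apply: measurable_funB; exact: measurable_Top.
have mS : measurable_fun I (fun t => \sum_(j in A) (w j t - v t)).
  by apply/measurable_EFinP; case/integrableP: (integrable_sum_sub A Kv Kw).
have half_ge0 : (0 <= 2^-1 :> R) by rewrite invr_ge0.
have halfM_ge0 : (0 <= (2^-1)%:E * M)%E by rewrite mule_ge0 // lee_fin.
have := Top_sum_diff_le_ae A Kv Kw le_M.
move/(L1norm_le_ae mT mS half_ge0 halfM_ge0)/le_trans; apply.
apply: le_trans (leeD2r _ (lee_wpmul2l _ (le_M A))) _; first by rewrite lee_fin.
have halves : 2^-1 + 2^-1 = 1 :> R by lra.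
by rewrite -ge0_muleDl ?lee_fin // -EFinD halves mul1e.
Qed.

End unit_interval.

Theorem proposition6p2 (R : realType) (n : nat) (v : R -> R) (u : nat -> R -> R) :
  inK v -> (forall i, inK (u i)) ->
  (limn_esup (supA n (fun i => Top (u i)) (Top v))
   <= limn_esup (supA n u v))%E.
Proof.
move=> Kv Ku; apply: le_limn_esup => i.
apply: bigmax_le => [|A _]; first exact: bigmax_ge_id.
exact: L1norm_sum_Top_diff_le.
Qed.
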